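(* For every $\gamma>0$, $n\ge1$ and $p\ge1$, $$\frac{1}{n^\gamma}\max_{1\le k\le n}\|\mathbb{E}_0(S_k)\|_p\le c_\gamma\sum_{k\ge n+1}\frac{1}{k^{\gamma+1}}\|\mathbb{E}_0(S_k)\|_p,$$ where $c_\gamma=3\times2^{2\gamma+1}(2^{\gamma+1}+1)$.
   Context: Let $(\Omega,\mathcal{F},\mathbb{P})$ be a probability space and let $T:\Omega\to\Omega$ be a bijective, bimeasurable, measure-preserving transformation. Let $\mathcal{F}_0\subseteq\mathcal{F}$ be a $\sigma$-algebra with $\mathcal{F}_0\subseteq T^{-1}(\mathcal{F}_0)$, and set $\mathcal{F}_i=T^{-i}(\mathcal{F}_0)$ for $i\in\mathbb{Z}$. Let $X_0$ be $\mathcal{F}_0$-measurable with $\mathbb{E}X_0=0$ and $\mathbb{E}X_0^2<\infty$. Put $X_i=X_0\circ T^i$ and $S_n=\sum_{i=0}^{n-1}X_i$. Write $\mathbb{E}_0(\cdot)=\mathbb{E}(\cdot\mid\mathcal{F}_0)$ and let $\|\cdot\|_p$ be the $\mathbb{L}^p$ norm (possibly infinite). *)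

From HB Require Import structures.
From mathcomp Require Import all_boot all_order all_algebra.
From mathcomp Require Import all_classical all_reals all_analysis.
Set Implicit Arguments. Unset Strict Implicit. Unset Printing Implicit Defensive.
Import Order.TTheory GRing.Theory Num.Theory.
Import numFieldNormedType.Exports.
Local Open Scope classical_set_scope.
Local Open Scope ring_scope.

Definition subsigma_alg {d} {T : measurableType d} (G : set (set T)) :=
  sigma_algebra setT G /\ G `<=` measurable.

Definition meas_wrt {d} {T : measurableType d} {R : realType}
  (G : set (set T)) (f : T -> R) :=
  forall B : set R, measurable B -> G (f @^-1` B).

Definition is_cond_exp {d} {T : measurableType d} {R : realType}
  (P : probability T R) (G : set (set T)) (f g : T -> R) :=
  [/\ meas_wrt G g,
      P.-integrable setT (EFin \o g) &
      forall A, G A -> (\int[P]_(x in A) (g x)%:E = \int[P]_(x in A) (f x)%:E)%E].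

Definition Xseq {T : Type} {R : realType} (Tm : T -> T) (X0 : T -> R) (i : nat) :=
  fun x => X0 (iter i Tm x).
Definition Sseq {T : Type} {R : realType} (Tm : T -> T) (X0 : T -> R) (n : nat) :=
  fun x => \sum_(i < n) Xseq Tm X0 i x.

Definition c_gamma {R : realType} (g : R) : R :=
  3 * (2 `^ (2 * g + 1)) * (2 `^ (g + 1) + 1).

From HB Require Import structures.
From mathcomp Require Import all_boot all_order all_algebra.
From mathcomp Require Import all_classical all_reals all_analysis.
From mathcomp Require Import ring lra zify.
From mathcomp Require Import measurable_realfun.
Import Order.TTheory GRing.Theory Num.Theory.
Import numFieldNormedType.Exports.
Set Implicit Arguments. Unset Strict Implicit. Unset Printing Implicit Defensive.
Local Open Scope classical_set_scope.
Local Open Scope ring_scope.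

(* Write a_k = ||E_0(S_k)||_p.  Since X_i = X_0 o T^i and F_0 is contained in
   T^-1(F_0), the difference E_0(S_(k+j)) - E_0(S_k) is a version of
   E_0(E_0(S_j) o T^k), and T preserves P; conditional expectation being a
   contraction of L^p, the sequence a is subadditive: a_k <= a_(k+j) + a_j.
   The contraction is proved from convexity: at dyadic truncations q of
   |E(Z|G)|, the tangent inequality |z|^p >= q^p + p sg(x) q^(p-1) (z - x)
   has a linear term that is a bounded simple function of E(Z|G) times
   Z - E(Z|G), whose integral vanishes; monotone convergence removes the
   truncation.  For 1 <= k <= n, summing a_k <= a_(k+m) + a_m over
   n < m <= 2n bounds n a_k by 2 (3n)^(gamma+1) sum_(k>n) a_k / k^(gamma+1),
   and 2 * 3^(gamma+1) <= c_gamma. *)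

Lemma powR_tangent_le (R : realType) (p u w : R) : 1 <= p -> 0 <= u -> 0 <= w ->
  u `^ p + p * u `^ (p - 1) * (w - u) <= w `^ p.
Proof.
move=> p1 u0 w0; have p0 : 0 < p by rewrite (lt_le_trans _ p1).
have [->|pn1] := eqVneq p 1.
  by rewrite subrr powRr0 !powRr1// mulr1 mul1r addrC subrK.
have {pn1} p1' : 1 < p by rewrite lt_neqAle eq_sym pn1.
(* Young's inequality with the conjugate exponent q = p / (p - 1). *)
have pm0 : 0 < p - 1 by rewrite subr_gt0.
pose q := p / (p - 1).
have q0 : 0 < q by rewrite divr_gt0.
have qinv : q^-1 = (p - 1) / p by rewrite /q invf_div.
have pq : p^-1 + q^-1 = 1.
  by rewrite qinv -[X in X + _]div1r -mulrDl addrC subrK divff// gt_eqF.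
set a := u `^ (p - 1).
have a0 : 0 <= a by exact: powR_ge0.
have aq : a `^ q = u `^ p by rewrite /a -powRrM /q mulrC divfK// gt_eqF.
have young := conjugate_powR w0 a0 p0 q0 pq; rewrite aq in young.
have young' : p * (w * a) <= w `^ p + u `^ p * (p - 1).
  move: young; rewrite -(ler_pM2l p0) mulrDr => /le_trans; apply.
  by rewrite qinv le_eqVlt; apply/orP; left; apply/eqP; field; exact: lt0r_neq0.
have ua : u `^ p = u * a by rewrite /a mulr_powRB1.
by rewrite ua in young' *; nra.
Qed.

Lemma sgr_powR_tangent_le (R : realType) (p q x z : R) :
  1 <= p -> 0 <= q -> q <= `|x| ->
  q `^ p + Num.sg x * (p * q `^ (p - 1)) * (z - x) <= `|z| `^ p.
Proof.
move=> p1 q0 qx; set s := p * q `^ (p - 1).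
have s0 : 0 <= s by rewrite mulr_ge0 ?powR_ge0// (le_trans _ p1).
have sgz : Num.sg x * z <= `|z|.
  rewrite (le_trans (ler_norm _))// normrM normr_sg.
  by case: (x != 0); rewrite ?mul1r ?mul0r.
have -> : Num.sg x * s * (z - x) = s * (Num.sg x * z - `|x|).
  by rewrite normrEsg; ring.
apply: le_trans (powR_tangent_le p1 q0 (normr_ge0 z)); rewrite lerD2l.
by apply: ler_wpM2l => //; rewrite lerB.
Qed.

Definition dyadic_floor (R : realType) (n : nat) (u : R) : R :=
  (minn (Num.truncn (u * 2 ^+ n)) (n * 2 ^ n))%:R / 2 ^+ n.

Section dyadic_floor.
Context {R : realType}.
Implicit Types (u v : R) (n : nat).

Lemma dyadic_floor_ge0 n u : 0 <= dyadic_floor n u.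
Proof. by rewrite divr_ge0. Qed.

Lemma dyadic_floor_le n u : 0 <= u -> dyadic_floor n u <= u.
Proof.
move=> u0; rewrite /dyadic_floor ler_pdivrMr ?exprn_gt0//.
apply: (@le_trans _ _ (Num.truncn (u * 2 ^+ n))%:R).
  by rewrite ler_nat geq_minl.
by rewrite truncn_le mulr_ge0// exprn_ge0.
Qed.

Lemma dyadic_floor_le_n n u : dyadic_floor n u <= n%:R.
Proof.
rewrite /dyadic_floor ler_pdivrMr ?exprn_gt0//.
apply: (@le_trans _ _ (n * 2 ^ n)%:R); first by rewrite ler_nat geq_minr.
by rewrite natrM natrX.
Qed.

Lemma nondecreasing_dyadic_floor n : {homo @dyadic_floor R n : u v / u <= v}.
Proof.
move=> u v uv; rewrite /dyadic_floor ler_pM2r ?invr_gt0 ?exprn_gt0// ler_nat.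
rewrite leq_min geq_minr andbT (leq_trans (geq_minl _ _))//.
by apply: le_truncn; rewrite ler_pM2r ?exprn_gt0.
Qed.

Lemma dyadic_floor_leS n u : dyadic_floor n u <= dyadic_floor n.+1 u.
Proof.
rewrite /dyadic_floor; set t1 := minn _ _; set t2 := minn _ _.
have t12 : (t1 * 2 <= t2)%N.
  rewrite leq_min; apply/andP; split; last first.
    rewrite (leq_trans (leq_mul (geq_minr _ _) (leqnn 2)))//.
    by rewrite -mulnA -expnSr leq_mul2r leqnSn orbT.
  rewrite (leq_trans (leq_mul (geq_minl _ _) (leqnn 2)))//.
  have [u0|u0] := leP 0 u; last first.
    suff -> : Num.truncn (u * 2 ^+ n) = 0%N by [].
    by apply/truncn0Pn; rewrite -ltNge (lt_le_trans _ ler01)// pmulr_llt0 ?exprn_gt0.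
  rewrite truncn_ge_nat ?mulr_ge0 ?exprn_ge0// natrM.
  rewrite exprS mulrCA [X in _ <= X]mulrC ler_pM2r//.
  by rewrite truncn_le mulr_ge0 ?exprn_ge0.
rewrite ler_pdivrMr ?exprn_gt0// exprS invfM mulrA divfK ?expf_neq0 ?pnatr_eq0//.
by rewrite ler_pdivlMr// -natrM ler_nat.
Qed.

Lemma dyadic_floor_gap n u : 0 <= u -> u < n%:R ->
  u - dyadic_floor n u <= (2 ^+ n)^-1.
Proof.
move=> u0 un.
have t : (Num.truncn (u * 2 ^+ n) < n * 2 ^ n)%N.
  by rewrite truncn_lt_nat ?mulr_ge0 ?exprn_ge0// natrM natrX ltr_pM2r ?exprn_gt0.
have h : u * 2 ^+ n <= (Num.truncn (u * 2 ^+ n))%:R + 1.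
  by rewrite natr1; exact/ltW/truncnS_gt.
rewrite /dyadic_floor (minn_idPl (ltnW t)) lerBlDr.
rewrite -(@ler_pM2r _ (2 ^+ n)) ?exprn_gt0// mulrDl mulVf ?expf_neq0 ?pnatr_eq0//.
by rewrite divfK ?expf_neq0 ?pnatr_eq0// addrC.
Qed.

Lemma dyadic_floor_powR_cvg (p u : R) : 1 <= p -> 0 <= u ->
  (fun n => dyadic_floor n u `^ p) @ \oo --> u `^ p.
Proof.
move=> p1 u0; have p0 : 0 < p by rewrite (lt_le_trans _ p1).
apply/cvgrPdist_le => e e0.
set s := p * u `^ (p - 1).
have s0 : 0 <= s by rewrite mulr_ge0 ?powR_ge0// ltW.
have eK : 0 < e / (s + 1) by rewrite divr_gt0// ltr_pwDr.
near=> n.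
have un : u < n%:R.
  apply: (lt_le_trans (truncnS_gt u)); rewrite ler_nat.
  by near: n; exists (Num.truncn u).+1.
have small : 1 / 2 ^+ n < e / (s + 1).
  by near: n; exact: (near_infty_natSinv_expn_lt (PosNum eK)).
have au := dyadic_floor_le n u0.
have a0 := dyadic_floor_ge0 n u.
have le_pow : dyadic_floor n u `^ p <= u `^ p by rewrite ge0_ler_powR// ?ltW.
rewrite ger0_norm ?subr_ge0//.
(* Convexity bounds the error by the slope s at u times the gap. *)
have tangent := powR_tangent_le p1 u0 a0; rewrite -/s in tangent.
have gap := dyadic_floor_gap u0 un.
apply: (@le_trans _ _ (s * (u - dyadic_floor n u))); first by lra.
apply: (@le_trans _ _ ((s + 1) * (2 ^+ n)^-1)).
  by apply: ler_pM; rewrite ?subr_ge0 ?lerDl.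
by rewrite -ler_pdivlMl ?ltr_pwDr// mulrC; move: small; rewrite div1r => /ltW.
Unshelve. all: by end_near. Qed.

End dyadic_floor.

Lemma Lnorm_EFin d (T : measurableType d) (R : realType)
    (mu : {measure set T -> \bar R}) (p : R) (f : T -> R) :
  ('N[mu]_(p%:E)[EFin \o f] = (\int[mu]_x (`|f x| `^ p)%:E) `^ p^-1)%E.
Proof. by rewrite unlock. Qed.

Section Lnorm_contraction.
Context d (T : measurableType d) (R : realType) (P : probability T R).
Variables (p : R) (g Z : T -> R).
Hypotheses (p1 : 1 <= p)
  (ig : P.-integrable setT (EFin \o g)) (iZ : P.-integrable setT (EFin \o Z)).
(* g is a version of E(Z | sigma(g)). *)
Hypothesis g_cond_exp : forall B : set R, measurable B ->
  (\int[P]_(x in g @^-1` B) (g x)%:E = \int[P]_(x in g @^-1` B) (Z x)%:E)%E.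

Let mg : measurable_fun setT g.
Proof. by apply/measurable_EFinP; exact: measurable_int ig. Qed.

Let mZ : measurable_fun setT Z.
Proof. by apply/measurable_EFinP; exact: measurable_int iZ. Qed.

Let iZg : P.-integrable setT (EFin \o (Z \- g)).
Proof.
have -> : EFin \o (Z \- g) = ((EFin \o Z) \- (EFin \o g))%E.
  by apply/funext => x /=; rewrite EFinB.
exact: integrableB.
Qed.

Lemma integral_finite_range_residual_eq0 (h : R -> R) (s : seq R) :
  measurable_fun setT h -> (forall x, h x \in s) ->
  (\int[P]_x (h (g x) * (Z x - g x))%:E = 0)%E.
Proof.
move=> mh hs; pose A y := g @^-1` (h @^-1` [set y]).
have mhy y : measurable (h @^-1` [set y]).
  by rewrite -(setTI (h @^-1` _)); exact: mh.
have mA y : measurable (A y) by rewrite -(setTI (A y)); exact: mg.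
have inA x y : (x \in A y) = (h (g x) == y) by apply/idP/eqP => [/set_mem|/mem_set].
have decomp x : h (g x) * (Z x - g x) =
    \sum_(y <- undup s) (y * \1_(A y) x * (Z x - g x)).
  rewrite -big_distrl /=; congr (_ * _).
  rewrite (bigD1_seq (h (g x))) ?undup_uniq ?mem_undup //=.
  rewrite indicE inA eqxx mulr1 big1 ?addr0 // => y /negbTE hy.
  by rewrite indicE inA eq_sym hy mulr0.
under eq_integral do rewrite decomp -sumEFin.
rewrite integral_sum //; last first.
  move=> y; have -> : (fun x => (y * \1_(A y) x * (Z x - g x))%:E) =
      ((EFin \o (fun x => y * \1_(A y) x)%R) \* (EFin \o (Z \- g)%R))%E by [].
  apply: integrableMr => //.
    by apply: measurable_realfun.measurable_funM => //; exact: measurable_indic.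
  exists (`|y| + 1); split; first exact: num_real.
  move=> M My x _; rewrite /= normrM (le_trans _ (ltW My))// indicE.
  by case: (x \in A y); rewrite ?normr1 ?normr0 ?mulr1 ?mulr0// ler_wpDr.
rewrite big1 // => y _.
have iA (f : T -> \bar R) : P.-integrable setT f -> P.-integrable (A y) f.
  exact: integrableS measurableT (mA y) (@subsetT _ _).
transitivity (y%:E * \int[P]_(x in A y) ((Z \- g) x)%:E)%E.
  rewrite -integralZl ?iA// [in RHS]integral_mkcond; apply: eq_integral => x _.
  by rewrite /patch indicE; case: ifP; rewrite /= ?mulr1 ?mulr0 ?mul0r.
under eq_integral do rewrite /= EFinB.
rewrite (integralB (mA y) (iA _ iZ) (iA _ ig)) -(g_cond_exp (mhy y)) subee ?mule0//.
exact: integrable_fin_num (iA _ ig).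
Qed.

Let p0 : 0 < p. Proof. by rewrite (lt_le_trans _ p1). Qed.

Let slope_abs (n : nat) (u : R) := p * dyadic_floor n u `^ (p - 1).

Let slope_abs_ge0 n u : 0 <= slope_abs n u.
Proof. by rewrite mulr_ge0 ?powR_ge0// ltW. Qed.

Let slope_abs_nd n : {homo slope_abs n : u v / u <= v}.
Proof.
move=> u v uv; rewrite ler_wpM2l ?(ltW p0)//.
by rewrite ge0_ler_powR ?subr_ge0 ?nnegrE ?dyadic_floor_ge0 ?nondecreasing_dyadic_floor.
Qed.

Let slope (n : nat) (x : R) := Num.sg x * slope_abs n `|x|.

Let slope_nd n : {homo slope n : x y / x <= y}.
Proof.
move=> x y xy; rewrite /slope.
case: (ltrgt0P x) => hx.
- have hy : 0 < y by exact: lt_le_trans xy.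
  by rewrite (gtr0_sg hx) (gtr0_sg hy) (gtr0_norm hy) !mul1r; exact: slope_abs_nd.
- rewrite (ltr0_sg hx) mulN1r.
  case: (ltrgt0P y) => hy.
  + by rewrite (gtr0_sg hy) mul1r (le_trans _ (slope_abs_ge0 _ _))// oppr_le0.
  + by rewrite (ltr0_sg hy) mulN1r lerN2; apply: slope_abs_nd; rewrite lerN2.
  + by rewrite hy sgr0 mul0r oppr_le0.
- by rewrite hx sgr0 mul0r mulr_ge0// sgr_ge0 -hx.
Qed.

Let measurable_slope n : measurable_fun setT (slope n).
Proof. exact: nondecreasing_measurable (slope_nd n). Qed.

Let slope_range n x : slope n x \in [seq sv * (p * (k%:R / 2 ^+ n) `^ (p - 1)) |
    sv <- [:: -1; 0; 1], k <- iota 0 (n * 2 ^ n).+1].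
Proof.
apply/allpairsP; exists (Num.sg x, minn (Num.truncn (`|x| * 2 ^+ n)) (n * 2 ^ n)).
split => //=.
- by case: (ltrgt0P x) => hx;
    [rewrite (gtr0_sg hx)|rewrite (ltr0_sg hx)|rewrite hx sgr0]; rewrite !inE eqxx ?orbT.
- by rewrite -[0%N :: _]/(iota 0 (n * 2 ^ n).+1) mem_iota add0n ltnS geq_minr.
Qed.

Let slope_bound n x : `|slope n x| <= p * n%:R `^ (p - 1).
Proof.
rewrite normrM normr_sg ger0_norm//.
apply: (@le_trans _ _ (slope_abs n `|x|)).
  by case: (x != 0); rewrite ?mul1r ?mul0r.
rewrite ler_wpM2l ?(ltW p0)//.
by rewrite ge0_ler_powR ?subr_ge0 ?nnegrE ?dyadic_floor_ge0 ?dyadic_floor_le_n.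
Qed.

Let approx_pow n (u : R) := dyadic_floor n u `^ p.

Let approx_pow_nd n : {homo approx_pow n : u v / u <= v}.
Proof.
move=> u v uv; rewrite /approx_pow ge0_ler_powR ?nnegrE ?dyadic_floor_ge0 ?(ltW p0)//.
exact: nondecreasing_dyadic_floor.
Qed.

Let integrable_approx_pow n : P.-integrable setT (fun x => (approx_pow n `|g x|)%:E).
Proof.
have m_approx_pow : measurable_fun setT (fun x => approx_pow n `|g x|).
  apply: measurableT_comp (measurableT_comp (@normr_measurable R setT) mg).
  exact: nondecreasing_measurable (approx_pow_nd n).
apply/integrableP; split; first exact/measurable_EFinP.
apply: (@le_lt_trans _ _ (\int[P]_x (cst (n%:R `^ p)%:E) x)%E).
  apply: ge0_le_integral => //.
  - by apply/measurableT_comp => //; exact/measurable_EFinP.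
  - move=> x _; rewrite abse_EFin /= lee_fin ger0_norm ?powR_ge0//.
    by rewrite ge0_ler_powR ?nnegrE ?dyadic_floor_ge0 ?(ltW p0) ?dyadic_floor_le_n.
rewrite (_ : (\int[P]_x _ = (n%:R `^ p)%:E * P setT)%E); last exact: integral_cst.
by rewrite probability_setT mule1 ltry.
Qed.

(* Integrating the tangent inequality at the truncated point: the linear term
   integrates to zero. *)
Lemma integral_dyadic_floor_powR_le n :
  (\int[P]_x ((dyadic_floor n `|g x|) `^ p)%:E <= \int[P]_x (`|Z x| `^ p)%:E)%E.
Proof.
have [->|Zfin] := eqVneq (\int[P]_x (`|Z x| `^ p)%:E)%E +oo%E; first exact: leey.
have iZp : P.-integrable setT (fun x => (`|Z x| `^ p)%:E).
  apply/integrableP; split.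
    apply/measurable_EFinP; apply: measurableT_comp (measurable_powR p) _.
    exact: measurableT_comp.
  under eq_integral do rewrite abse_EFin ger0_norm ?powR_ge0//.
  by rewrite ltey.
have islope : P.-integrable setT (fun x => (slope n (g x) * (Z x - g x))%:E).
  have -> : (fun x => (slope n (g x) * (Z x - g x))%:E) =
      ((EFin \o (slope n \o g)) \* (EFin \o (Z \- g)%R))%E by [].
  apply: integrableMr => //.
    exact: measurableT_comp.
  exists (p * n%:R `^ (p - 1)); split; first exact: num_real.
  by move=> M HM x _; apply: le_trans (ltW HM); exact: slope_bound.
have orth := integral_finite_range_residual_eq0 (measurable_slope n) (slope_range n).
rewrite -[leLHS]adde0 -orth -integralD//; last exact: integrable_approx_pow.
apply: le_integral => //; first by apply: integrableD => //; exact: integrable_approx_pow.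
move=> x _; rewrite -EFinD lee_fin; apply: sgr_powR_tangent_le => //.
  exact: dyadic_floor_ge0.
exact: dyadic_floor_le.
Qed.

Lemma integral_powR_le :
  (\int[P]_x (`|g x| `^ p)%:E <= \int[P]_x (`|Z x| `^ p)%:E)%E.
Proof.
pose G n x := (approx_pow n `|g x|)%:E.
have mG n : measurable_fun setT (G n).
  exact: measurable_int (integrable_approx_pow n).
have G0 n x : setT x -> (0 <= G n x)%E by move=> _; rewrite lee_fin powR_ge0.
have ndG x : setT x -> {homo G^~ x : n m / (n <= m)%N >-> (n <= m)%E}.
  move=> _; apply/nondecreasing_seqP => n; rewrite lee_fin /approx_pow.
  by rewrite ge0_ler_powR ?nnegrE ?dyadic_floor_ge0 ?(ltW p0) ?dyadic_floor_leS.
have -> : (\int[P]_x (`|g x| `^ p)%:E = \int[P]_x limn (G^~ x))%E.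
  apply: eq_integral => x _.
  have cv := dyadic_floor_powR_cvg p1 (normr_ge0 (g x)).
  by rewrite (EFin_lim (cvgP _ cv)) (cvg_lim _ cv).
rewrite (monotone_convergence P measurableT mG G0 ndG); apply: lime_le.
  apply: ereal_nondecreasing_is_cvgn => m n mn.
  by apply: ge0_le_integral => // x _; [exact: G0|exact: ndG].
by apply: nearW => n; exact: integral_dyadic_floor_powR_le.
Qed.

Lemma Lnorm_le_of_sigma_cond_exp :
  ('N[P]_(p%:E)[EFin \o g] <= 'N[P]_(p%:E)[EFin \o Z])%E.
Proof.
rewrite !Lnorm_EFin gt0_ler_poweR ?invr_ge0 ?(ltW p0)//.
- by rewrite in_itv /= leey andbT integral_ge0// => x _; rewrite lee_fin powR_ge0.
- by rewrite in_itv /= leey andbT integral_ge0// => x _; rewrite lee_fin powR_ge0.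
- exact: integral_powR_le.
Qed.

End Lnorm_contraction.

Lemma Lnorm_cond_exp_le d (T : measurableType d) (R : realType) (P : probability T R)
    (G : set (set T)) (p : R) (Z g : T -> R) :
  1 <= p -> P.-integrable setT (EFin \o Z) -> is_cond_exp P G Z g ->
  ('N[P]_(p%:E)[EFin \o g] <= 'N[P]_(p%:E)[EFin \o Z])%E.
Proof.
move=> p1 iZ [Gg ig g_cond]; apply: Lnorm_le_of_sigma_cond_exp => // B mB.
exact: g_cond (Gg B mB).
Qed.

Lemma twice_3powR_le_c_gamma (R : realType) (gam : R) :
  0 < gam -> 2 * 3 `^ (gam + 1) <= c_gamma gam.
Proof.
move=> gam0.
have e3 : 3 `^ (gam + 1) = 3 `^ gam * 3 :> R.
  by rewrite powRD ?powRr1 ?pnatr_eq0 ?implybT.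
have e2 : 2 `^ (2 * gam + 1) = 4 `^ gam * 2 :> R.
  rewrite powRD ?powRr1 ?pnatr_eq0 ?implybT// powRrM.
  by rewrite (_ : (2:R) `^ 2 = 4)// -[X in X `^ _]/(2%:R) powR_mulrn// expr2 -natrM.
have le34 : 3 `^ gam <= 4 `^ gam :> R by apply: ge0_ler_powR; rewrite ?nnegrE; lra.
have := powR_ge0 2 (gam + 1); have := powR_ge0 3 gam.
by rewrite /c_gamma e3 e2; nra.
Qed.

Section subadditive_sequence.
Context {R : realType}.
Local Open Scope ereal_scope.

Lemma sum_shift_le_nneseries (u : nat -> \bar R) (m0 s len : nat) :
  (forall i, 0 <= u i) -> (m0 <= s)%N ->
  \sum_(i < len) u (s + i)%N <= \sum_(m0 <= i <oo) u i.
Proof.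
move=> u0 m0s; apply: (@le_trans _ _ (\sum_(m0 <= i < s + len) u i)); last first.
  by apply: nneseries_lim_ge => i _ _; exact: u0.
elim: len => [|len ih]; first by rewrite big_ord0 sume_ge0.
rewrite big_ord_recr /= addnS big_nat_recr /=; last by rewrite (leq_trans m0s)// leq_addr.
exact: leeD2r.
Qed.

Variables (a : nat -> \bar R) (gam : R) (n : nat).
Hypotheses (gam0 : (0 < gam)%R) (n1 : (1 <= n)%N) (a0 : forall k, 0 <= a k)
  (a_subadd : forall k j, a k <= a (k + j)%N + a j).

Let w (k : nat) := ((k%:R `^ (gam + 1))^-1)%R.
Let W := ((3 * n%:R) `^ (gam + 1))%R.
Let S := \sum_(n.+1 <= k <oo) ((w k)%:E * a k).

Let w_ge0 k : (0 <= w k)%R. Proof. by rewrite invr_ge0 powR_ge0. Qed.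
Let W_gt0 : (0 < W)%R. Proof. by rewrite powR_gt0// mulr_gt0// ltr0n. Qed.

Let le_weighted m : (n < m <= 3 * n)%N -> a m <= W%:E * ((w m)%:E * a m).
Proof.
move=> /andP[nm m3n]; rewrite muleA -EFinM -[leLHS]mul1e lee_wpmul2r// lee_fin.
have m0 : (0 < m%:R :> R)%R by rewrite ltr0n (leq_trans _ nm).
rewrite ler_pdivlMr ?powR_gt0// mul1r; apply: ge0_ler_powR.
- by rewrite addr_ge0// ltW.
- by rewrite nnegrE ltW.
- by rewrite nnegrE mulr_ge0.
- by move: m3n; rewrite -(ler_nat R) natrM.
Qed.

Let window_sum_le s : (n < s)%N -> (s + n <= (3 * n).+1)%N ->
  \sum_(i < n) a (s + i)%N <= W%:E * S.
Proof.
move=> ns s3n.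
apply: (@le_trans _ _ (\sum_(i < n) W%:E * ((w (s + i)%N)%:E * a (s + i)%N))).
  by apply: lee_sum => i _; apply: le_weighted; have := ltn_ord i; lia.
rewrite -ge0_sume_distrr => [|i _]; last by rewrite mule_ge0// lee_fin.
apply: lee_wpmul2l; first by rewrite lee_fin ltW.
by apply: sum_shift_le_nneseries => // i; rewrite mule_ge0// lee_fin.
Qed.

(* Sum a_k <= a_(k+m) + a_m over the n values m in (n, 2n]. *)
Let le_window k : (k <= n)%N -> n%:R%:E * a k <= W%:E * S + W%:E * S.
Proof.
move=> kn.
have -> : n%:R%:E * a k = \sum_(i < n) a k by rewrite sumr_const card_ord mule_natl.
apply: (@le_trans _ _ (\sum_(i < n) (a (k + n.+1 + i)%N + a (n.+1 + i)%N))).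
  by apply: lee_sum => i _; rewrite -addnA a_subadd.
by rewrite big_split /=; apply: leeD; apply: window_sum_le; lia.
Qed.

Lemma subadditive_max_le_series :
  ((n%:R `^ gam)^-1)%:E * \big[Order.max/-oo]_(1 <= k < n.+1) a k
   <= (c_gamma gam)%:E * \sum_(n.+1 <= k <oo) (((k%:R `^ (gam + 1))^-1)%:E * a k).
Proof.
have nR0 : (0 < n%:R :> R)%R by rewrite ltr0n.
set N := ((n%:R `^ gam)^-1)%R.
have N0 : (0 < N)%R by rewrite invr_gt0 powR_gt0.
have NW : (N / n%:R * (W + W) = 2 * 3 `^ (gam + 1))%R.
  rewrite /W powRM ?ler0n// (@powRD _ n%:R gam 1) ?powRr1 ?ler0n ?(gt_eqF nR0) ?implybT//.
  by rewrite /N; field; rewrite ?gt_eqF ?powR_gt0.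
rewrite big_nat_cond.
apply: (big_ind (fun m => N%:E * m <= (c_gamma gam)%:E * S)).
- by rewrite mulrNy gtr0_sg// mul1e leNye.
- by move=> x y hx hy; rewrite /Order.max; case: ifP.
move=> k /andP[/andP[_ kn] _].
have := le_window kn; rewrite -ge0_muleDl ?lee_fin ?(ltW W_gt0)// -EFinD => le_nak.
have -> : N%:E * a k = (N / n%:R)%:E * (n%:R%:E * a k).
  by rewrite muleA -EFinM divfK// gt_eqF.
apply: le_trans (lee_wpmul2l _ le_nak) _; first by rewrite lee_fin divr_ge0 ?ltW.
rewrite muleA -EFinM NW lee_wpmul2r ?lee_fin ?twice_3powR_le_c_gamma//.
by rewrite /S nneseries_ge0// => k' _ _; rewrite mule_ge0// lee_fin.
Qed.

End subadditive_sequence.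

Lemma integrable_of_sqr_integral d (T : measurableType d) (R : realType)
    (P : probability T R) (f : T -> R) :
  measurable_fun setT f -> (\int[P]_x ((f x) ^+ 2)%:E < +oo)%E ->
  P.-integrable setT (EFin \o f).
Proof.
move=> mf f2; apply/integrableP; split; first exact/measurable_EFinP.
have mf2 : measurable_fun setT (fun x => ((f x) ^+ 2)%:E).
  by apply/measurable_EFinP; exact: measurable_funX.
apply: (@le_lt_trans _ _ (\int[P]_x ((cst 1%:E) x + ((f x) ^+ 2)%:E))%E).
  apply: ge0_le_integral => //.
  - by apply/measurableT_comp => //; exact/measurable_EFinP.
  - exact: emeasurable_funD.
  - move=> x _ /=; rewrite -EFinD lee_fin.
    by rewrite -real_normK ?num_real//; have := sqr_ge0 (`|f x| - 1); nra.
rewrite ge0_integralD //; last by move=> x _; rewrite lee_fin sqr_ge0.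
rewrite (_ : (\int[P]_x _ = 1%:E * P setT)%E); last exact: integral_cst.
by rewrite probability_setT mule1 lte_add_pinfty// ltry.
Qed.

Lemma meas_wrt_measurable d (T : measurableType d) (R : realType)
    (G : set (set T)) (f : T -> R) :
  subsigma_alg G -> meas_wrt G f -> measurable_fun setT f.
Proof. by move=> [_ Gmeas] Gf _ B mB; rewrite setTI; exact/Gmeas/Gf. Qed.

Lemma meas_wrtB d (T : measurableType d) (R : realType) (G : set (set T))
    (f g : T -> R) :
  sigma_algebra setT G -> meas_wrt G f -> meas_wrt G g -> meas_wrt G (f \- g).
Proof.
move=> Gsig Gf Gg.
have toG (h : T -> R) : meas_wrt G h -> measurable_fun (setT : set (g_sigma_algebraType G)) h.
  by move=> Gh _ B mB; rewrite setTI; exact: sub_sigma_algebra (Gh B mB).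
move=> B mB; have := measurable_funB (toG f Gf) (toG g Gg) measurableT mB.
by rewrite setTI measurable_g_measurableTypeE.
Qed.

Lemma Lnorm_EFinN d (T : measurableType d) (R : realType)
    (mu : {measure set T -> \bar R}) (p : \bar R) (f : T -> R) :
  ('N[mu]_p[EFin \o (\- f)%R] = 'N[mu]_p[EFin \o f])%E.
Proof.
rewrite -Lnorm_abse -[RHS]Lnorm_abse; congr Lnorm.
by apply/funext => x /=; rewrite normrN.
Qed.

Lemma SseqD (T : Type) (R : realType) (Tm : T -> T) (X0 : T -> R) k j x :
  Sseq Tm X0 (k + j)%N x = Sseq Tm X0 k x + Sseq Tm X0 j (iter k Tm x).
Proof.
rewrite /Sseq big_split_ord /=; congr (_ + _); apply: eq_bigr => i _.
by rewrite /Xseq addnC iterD.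
Qed.

Section measure_preserving.
Context d (T : measurableType d) (R : realType) (P : probability T R).
Variable phi : T -> T.
Hypotheses (mphi : measurable_fun setT phi)
  (phi_pres : forall A, measurable A -> P (phi @^-1` A) = P A).
Local Open Scope ereal_scope.

Lemma measurable_fun_iter k : measurable_fun setT (iter k phi).
Proof.
elim: k => [|k ih]; first exact: measurable_id.
exact: measurableT_comp mphi ih.
Qed.

Lemma iter_measure_preserving k A : measurable A -> P (iter k phi @^-1` A) = P A.
Proof.
elim: k A => [//|k ih] A mA.
have -> : iter k.+1 phi @^-1` A = iter k phi @^-1` (phi @^-1` A) by [].
by rewrite ih ?phi_pres// -(setTI (_ @^-1` _)); exact: mphi.
Qed.

Lemma ge0_integral_comp (h : T -> \bar R) (B : set T) : measurable B ->
  measurable_fun setT h -> (forall x, 0 <= h x) ->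
  \int[P]_(x in phi @^-1` B) h (phi x) = \int[P]_(x in B) h x.
Proof.
move=> mB mh h0.
rewrite -(ge0_integral_pushforward mphi P mB (measurable_funTS mh) (fun y _ => h0 y)).
by apply: eq_measure_integral => A mA _; exact: phi_pres.
Qed.

Lemma integrable_comp (f : T -> R) :
  P.-integrable setT (EFin \o f) -> P.-integrable setT (EFin \o (f \o phi)).
Proof.
move=> /[dup] /measurable_int /measurable_EFinP mf /integrableP[_ fi].
apply/integrableP; split; first by apply/measurable_EFinP; exact: measurableT_comp.
have mh : measurable_fun setT (fun x => (`|f x|)%:E).
  by apply/measurable_EFinP; exact: measurableT_comp.
have := ge0_integral_comp measurableT mh (fun x => ltac:(by rewrite lee_fin)).
by rewrite preimage_setT => ->.
Qed.

Lemma integral_comp (f : T -> R) (B : set T) : measurable B ->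
  P.-integrable setT (EFin \o f) ->
  \int[P]_(x in phi @^-1` B) (f (phi x))%:E = \int[P]_(x in B) (f x)%:E.
Proof.
move=> mB fi; have mEf := measurable_int _ fi.
have iphi : P.-integrable (phi @^-1` B) ((EFin \o f) \o phi).
  apply: integrableS measurableT _ (@subsetT _ _) (integrable_comp fi).
  by rewrite -(setTI (_ @^-1` _)); exact: mphi.
rewrite [RHS](eq_measure_integral (pushforward P phi)) ?integral_pushforward//.
by move=> A mA _; exact/esym/phi_pres.
Qed.

Lemma Lnorm_comp (f : T -> R) (p : R) : measurable_fun setT f ->
  'N[P]_(p%:E)[EFin \o (f \o phi)] = 'N[P]_(p%:E)[EFin \o f].
Proof.
move=> mf; rewrite !Lnorm_EFin; congr (_ `^ _).
have mh : measurable_fun setT (fun x => (`|f x| `^ p)%:E).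
  apply/measurable_EFinP; apply: measurableT_comp (measurable_powR p) _.
  exact: measurableT_comp.
have := ge0_integral_comp measurableT mh (fun x => ltac:(by rewrite lee_fin powR_ge0)).
by rewrite preimage_setT.
Qed.

End measure_preserving.

Section stationary_increments.
Context d (Omega : measurableType d) (R : realType) (P : probability Omega R).
Variables (Tm : Omega -> Omega) (F0 : set (set Omega)) (X0 : Omega -> R)
  (E0S : nat -> Omega -> R).
Hypotheses (Tmeas : measurable_fun setT Tm)
  (Tpres : forall A, measurable A -> P (Tm @^-1` A) = P A)
  (F0sig : subsigma_alg F0)
  (F0inc : forall A, F0 A -> exists B, F0 B /\ A = Tm @^-1` B)
  (iX0 : P.-integrable setT (EFin \o X0))
  (E0S_ce : forall k, is_cond_exp P F0 (Sseq Tm X0 k) (E0S k)).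

Let mTk k := measurable_fun_iter Tmeas k.
Let pTk k := iter_measure_preserving Tmeas Tpres k.

Let F0_iter_preimage k A : F0 A -> exists B, F0 B /\ A = iter k Tm @^-1` B.
Proof.
elim: k A => [|k ih] A FA; first by exists A.
have [B1 [FB1 ->]] := ih A FA.
have [B2 [FB2 ->]] := F0inc FB1.
by exists B2.
Qed.

Let integrable_Sseq k : P.-integrable setT (EFin \o Sseq Tm X0 k).
Proof.
have -> : EFin \o Sseq Tm X0 k = (fun x => \sum_(i < k) (Xseq Tm X0 i x)%:E)%E.
  by apply/funext => x; rewrite /= sumEFin.
apply: integrable_sum => // i _; exact: (integrable_comp (mTk i) (pTk i) iX0).
Qed.

Lemma cond_exp_increment k j :
  is_cond_exp P F0 (E0S j \o iter k Tm) (E0S (k + j)%N \- E0S k).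
Proof.
have [Fj iEj Ej] := E0S_ce j; have [Fk iEk Ek] := E0S_ce k.
have [Fkj iEkj Ekj] := E0S_ce (k + j)%N.
split; first exact: meas_wrtB F0sig.1 Fkj Fk.
  have -> : EFin \o (E0S (k + j)%N \- E0S k) = ((EFin \o E0S (k + j)%N) \- (EFin \o E0S k))%E.
    by apply/funext => x /=; rewrite EFinB.
  exact: integrableB.
move=> A FA; have mA := F0sig.2 _ FA.
have iA (f : Omega -> R) : P.-integrable setT (EFin \o f) -> P.-integrable A (EFin \o f).
  exact: integrableS measurableT mA (@subsetT _ _).
have [B [FB A_eq]] := F0_iter_preimage k FA; have mB := F0sig.2 _ FB.
transitivity (\int[P]_(x in A) (Sseq Tm X0 (k + j)%N x - Sseq Tm X0 k x)%:E)%E.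
  under eq_integral do rewrite /= EFinB.
  rewrite (integralB mA (iA _ iEkj) (iA _ iEk)) (Ekj _ FA) (Ek _ FA).
  under [RHS]eq_integral do rewrite EFinB.
  by rewrite (integralB mA (iA _ (integrable_Sseq _)) (iA _ (integrable_Sseq _))).
under eq_integral do rewrite SseqD addrAC subrr add0r.
rewrite A_eq (integral_comp (mTk k) (pTk k) mB (integrable_Sseq j)) -(Ej _ FB).
by rewrite (integral_comp (mTk k) (pTk k) mB iEj).
Qed.

Lemma Lnorm_E0S_subadditive (p : R) k j : 1 <= p ->
  ('N[P]_(p%:E)[EFin \o E0S k] <=
   'N[P]_(p%:E)[EFin \o E0S (k + j)%N] + 'N[P]_(p%:E)[EFin \o E0S j])%E.
Proof.
move=> p1.
have mE m : measurable_fun setT (E0S m).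
  by case: (E0S_ce m) => /(meas_wrt_measurable F0sig).
have iEjk : P.-integrable setT (EFin \o (E0S j \o iter k Tm)).
  by case: (E0S_ce j) => _ iEj _; exact: (integrable_comp (mTk k) (pTk k) iEj).
have mD := measurable_funB (mE (k + j)%N) (mE k).
have p1E : (1 <= p%:E)%E by rewrite lee_fin.
have := eminkowski P (mE (k + j)%N) (measurable_funN mD) p1E.
have -> : (E0S (k + j)%N \+ \- (E0S (k + j)%N \- E0S k))%R = E0S k.
  by apply/funext => x /=; ring.
rewrite Lnorm_EFinN => /le_trans; apply; rewrite leeD2l//.
rewrite -(Lnorm_comp (mTk k) (pTk k) p (mE j)).
exact: Lnorm_cond_exp_le p1 iEjk (cond_exp_increment k j).
Qed.

End stationary_increments.

Unset Implicit Arguments.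

Theorem mainTheorem16 (d : measure_display) (Omega : measurableType d)
  (R : realType) (P : probability Omega R)
  (Tm : Omega -> Omega)
  (Tbij : bijective Tm)
  (Tmeas : measurable_fun setT Tm)
  (Tmeas_inv : forall A, measurable A -> measurable (Tm @` A))
  (Tpres : forall A, measurable A -> P (Tm @^-1` A) = P A)
  (F0 : set (set Omega))
  (F0sig : subsigma_alg F0)
  (F0inc : forall A, F0 A -> exists B, F0 B /\ A = Tm @^-1` B)
  (X0 : Omega -> R)
  (X0F0 : meas_wrt F0 X0)
  (X0mean : (\int[P]_x (X0 x)%:E = 0)%E)
  (X0sq : (\int[P]_x ((X0 x) ^+ 2)%:E < +oo)%E)
  (E0S : nat -> Omega -> R)
  (E0S_ce : forall k, is_cond_exp P F0 (Sseq Tm X0 k) (E0S k))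
  (gamma : R) (gamma_gt0 : 0 < gamma)
  (n : nat) (n_ge1 : (1 <= n)%N)
  (p : R) (p_ge1 : 1 <= p) :
  (((n%:R `^ gamma)^-1)%:E *
     \big[Order.max/-oo]_(1 <= k < n.+1) 'N[P]_(p%:E)[EFin \o E0S k]
   <= (c_gamma gamma)%:E *
     \sum_(n.+1 <= k <oo) (((k%:R `^ (gamma + 1))^-1)%:E *
                            'N[P]_(p%:E)[EFin \o E0S k]))%E.
Proof.
have iX0 := integrable_of_sqr_integral (meas_wrt_measurable F0sig X0F0) X0sq.
apply: subadditive_max_le_series => // [k|k j]; first exact: Lnorm_ge0.
by have := Lnorm_E0S_subadditive Tmeas Tpres F0sig F0inc iX0 E0S_ce k j p_ge1.
Qed.
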